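(* Let $\boldsymbol{\omega}\in\mathbb{R}^d$, $\tau>d-1$, and let $\gamma>0$ be a constant such that (a) $\delta_j(\boldsymbol{\omega}\cdot\boldsymbol{\nu})\ge\gamma|\boldsymbol{\nu}|^{-\tau}$ for all $j$ and all $\boldsymbol{\nu}\ne\boldsymbol{0},\sigma(\boldsymbol{\nu},j)\boldsymbol{e}_j$, and (b) $\delta_j(\boldsymbol{\omega}\cdot\boldsymbol{\nu})+\delta_{j'}(\boldsymbol{\omega}\cdot\boldsymbol{\nu}')\ge\gamma|\boldsymbol{\nu}-\boldsymbol{\nu}'|^{-\tau}$ for all $j,j'\in\{1,\ldots,d\}$ and all $\boldsymbol{\nu}\ne\boldsymbol{\nu}'$ with $\boldsymbol{\nu}-\boldsymbol{\nu}'\ne\sigma(\boldsymbol{\nu},j)\boldsymbol{e}_j-\sigma(\boldsymbol{\nu}',j')\boldsymbol{e}_{j'}$. Let $\boldsymbol{\nu},\boldsymbol{\nu}'\in\mathbb{Z}^d$ with $\boldsymbol{\nu}\ne\boldsymbol{\nu}'$ and suppose that for some $n\in\{0,1,2,\ldots\}$ and $j,j'\in\{1,\ldots,d\}$ one has $\delta_j(\boldsymbol{\omega}\cdot\boldsymbol{\nu})\le2^{-n}\gamma$ and $\delta_{j'}(\boldsymbol{\omega}\cdot\boldsymbol{\nu}')\le2^{-n}\gamma$. Then either $|\boldsymbol{\nu}-\boldsymbol{\nu}'|>2^{(n-2)/\tau}$, or $|\boldsymbol{\nu}-\boldsymbol{\nu}'|=2$ and $\delta_j(\boldsymbol{\o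mega}\cdot\boldsymbol{\nu})=\delta_{j'}(\boldsymbol{\omega}\cdot\boldsymbol{\nu}')$.
   Context: $|\boldsymbol{\nu}|=|\nu_1|+\cdots+|\nu_d|$; $\boldsymbol{e}_j$ is the $j$-th standard basis vector. For $j\in\{1,\ldots,d\}$ and $\boldsymbol{\nu}\in\mathbb{Z}^d$, $\delta_j(\boldsymbol{\omega}\cdot\boldsymbol{\nu}):=\min\{|\boldsymbol{\omega}\cdot\boldsymbol{\nu}-\omega_j|,|\boldsymbol{\omega}\cdot\boldsymbol{\nu}+\omega_j|\}=|\boldsymbol{\omega}\cdot(\boldsymbol{\nu}-\sigma(\boldsymbol{\nu},j)\boldsymbol{e}_j)|$, where $\sigma(\boldsymbol{\nu},j)\in\{\pm1\}$ is a minimizer. (Such a $\gamma$ exists when $\boldsymbol{\omega}$ satisfies $|\boldsymbol{\omega}\cdot\boldsymbol{\nu}|>\gamma_0|\boldsymbol{\nu}|^{-\tau}$ for all nonzero $\boldsymbol{\nu}\in\mathbb{Z}^d$.) *)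

From HB Require Import structures.
From mathcomp Require Import all_boot all_order all_algebra.
From mathcomp Require Import reals exp.
Set Implicit Arguments. Unset Strict Implicit. Unset Printing Implicit Defensive.
Import Order.TTheory GRing.Theory Num.Theory.
Local Open Scope ring_scope.

(* omega . nu, for omega in R^d and nu in Z^d (row vectors, indices 'I_d = {1..d} shifted) *)
Definition dotp {R : realType} {d : nat} (w : 'rV[R]_d) (nu : 'rV[int]_d) : R :=
  \sum_(i < d) w 0 i * (nu 0 i)%:~R.

Definition norm1 {d : nat} (nu : 'rV[int]_d) : nat :=
  \sum_(i < d) `|nu ord0 i|%N.

Definition evec {d : nat} (j : 'I_d) : 'rV[int]_d := delta_mx 0 j.

Definition deltaj {R : realType} {d : nat} (w : 'rV[R]_d) (j : 'I_d)
  (nu : 'rV[int]_d) : R :=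
  Num.min `|dotp w nu - w 0 j| `|dotp w nu + w 0 j|.

(* sigma(nu, j) in {+1,-1}: a minimizer; ties broken in favour of +1 *)
Definition sigma {R : realType} {d : nat} (w : 'rV[R]_d) (nu : 'rV[int]_d)
  (j : 'I_d) : int :=
  if `|dotp w nu - w 0 j| <= `|dotp w nu + w 0 j| then 1 else -1.

(* If nu - nu' is exactly sigma(nu,j) e_j - sigma(nu',j') e_j', then
   nu - sigma(nu,j) e_j = nu' - sigma(nu',j') e_j', so the two small divisors
   coincide and |nu - nu'| = 2.  Otherwise hypothesis (b) applies and gives
   gamma |nu - nu'|^(-tau) <= 2^(1-n) gamma, i.e. |nu - nu'| >= 2^((n-1)/tau),
   which is more than 2^((n-2)/tau). *)
From HB Require Import structures.
From mathcomp Require Import all_boot all_order all_algebra.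
From mathcomp Require Import reals exp lra.
Import Order.TTheory GRing.Theory Num.Theory.
Local Open Scope ring_scope.

Section SmallDivisors.
Variables (R : realType) (d : nat) (w : 'rV[R]_d).

Lemma dotp_subZevec (nu : 'rV[int]_d) (s : int) (j : 'I_d) :
  dotp w (nu - s *: evec j) = dotp w nu - s%:~R * w 0 j.
Proof.
rewrite /dotp.
under eq_bigr => i _ do rewrite !mxE intrD intrN mulrDr mulrN.
rewrite big_split /= sumrN; congr (_ - _).
rewrite (bigD1 j) //= big1 ?addr0; first by rewrite eqxx mulr1 mulrC.
by move=> i /negbTE ->; rewrite !mulr0.
Qed.

Lemma deltajE (nu : 'rV[int]_d) (j : 'I_d) :
  deltaj w j nu = `|dotp w (nu - sigma w nu j *: evec j)|.
Proof.
rewrite dotp_subZevec /deltaj /sigma; case: ifP => h.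
  by rewrite mul1r; apply/min_idPl.
by rewrite mulN1r opprK; apply/min_idPr; rewrite ltW // ltNge h.
Qed.

Lemma sigma_sign (nu : 'rV[int]_d) (j : 'I_d) :
  (sigma w nu j == 1) || (sigma w nu j == -1).
Proof. by rewrite /sigma; case: ifP. Qed.

Lemma deltaj_eq_of_sub (nu nu' : 'rV[int]_d) (j j' : 'I_d) :
  nu - nu' = sigma w nu j *: evec j - sigma w nu' j' *: evec j' ->
  deltaj w j nu = deltaj w j' nu'.
Proof.
set a := sigma w nu j *: evec j; set b := sigma w nu' j' *: evec j'.
move=> hsub; rewrite !deltajE -/a -/b; congr (`|dotp w _|).
by rewrite -[nu](subrK nu') hsub addrAC (addrAC a) subrr add0r addrC.
Qed.

End SmallDivisors.

Lemma norm1_eq0 d (nu : 'rV[int]_d) : norm1 nu = 0%N -> nu = 0.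
Proof.
rewrite /norm1 => /eqP; rewrite sum_nat_eq0 => /forallP nu0.
apply/matrixP => i k; rewrite ord1 mxE; apply/eqP.
by rewrite -absz_eq0; apply: nu0.
Qed.

Lemma norm1_signed_evecB d (j j' : 'I_d) (s s' : int) :
  (s == 1) || (s == -1) -> (s' == 1) || (s' == -1) ->
  s *: evec j - s' *: evec j' != 0 -> norm1 (s *: evec j - s' *: evec j') = 2%N.
Proof.
move=> hs hs' hnz; rewrite /norm1.
have E i : (s *: evec j - s' *: evec j') ord0 i = s * (i == j)%:R - s' * (i == j')%:R.
  by rewrite !mxE.
have [ejj|njj] := eqVneq j j'.
  subst j'.
  have hss : s != s' by apply: contraNneq hnz => ->; rewrite subrr.
  rewrite (bigD1 j) //= big1 ?addn0; last first.
    by move=> i /negbTE hi; rewrite E hi !mulr0 subrr.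
  by rewrite E eqxx !mulr1; move: hs hs' hss; do 2 case/orP => /eqP ->.
rewrite (bigD1 j) //= (bigD1 j') /=; last by rewrite eq_sym njj.
rewrite big1 ?addn0; last first.
  by move=> i /andP [/negbTE h1 /negbTE h2]; rewrite E h1 h2 !mulr0 subrr.
rewrite !E eqxx (negbTE njj) eq_sym (negbTE njj) !mulr0 !mulr1 subr0 sub0r eqxx mulr1.
by move: hs hs'; do 2 case/orP => /eqP ->.
Qed.

Lemma powR2_lt_of_powRN_le (R : realType) (x tau : R) (n : nat) :
  0 < tau -> 0 < x -> powR x (- tau) <= 2 * 2 ^- n ->
  powR 2 ((n%:R - 2) / tau) < x.
Proof.
move=> tau0 x0.
have ln2_gt0 : 0 < ln (2 : R) by apply: ln_gt0; lra.
rewrite -ler_ln ?posrE ?powR_gt0 ?mulr_gt0 ?invr_gt0 ?exprn_gt0 //.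
rewrite ln_powR lnM ?posrE ?invr_gt0 ?exprn_gt0 // lnV ?posrE ?exprn_gt0 //.
rewrite lnXn // => hln.
have hlnx : (n%:R - 1) * ln (2 : R) <= tau * ln x.
  by move: hln; rewrite -mulr_natr; nra.
rewrite -ltr_ln ?posrE ?powR_gt0 // ln_powR mulrAC ltr_pdivrMr //.
by rewrite mulrBl -mulr_natl; nra.
Qed.

Theorem lemma3p2 (R : realType) (d : nat) (w : 'rV[R]_d) (tau gamma : R)
  (htau : (d%:R - 1 < tau)) (hgamma : 0 < gamma)
  (ha : forall (j : 'I_d) (nu : 'rV[int]_d),
      nu != 0 -> nu != (sigma w nu j) *: evec j ->
      gamma * powR (norm1 nu)%:R (- tau) <= deltaj w j nu)
  (hb : forall (j j' : 'I_d) (nu nu' : 'rV[int]_d),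
      nu != nu' ->
      nu - nu' != (sigma w nu j) *: evec j - (sigma w nu' j') *: evec j' ->
      gamma * powR (norm1 (nu - nu'))%:R (- tau) <= deltaj w j nu + deltaj w j' nu')
  (nu nu' : 'rV[int]_d) (hne : nu != nu') (n : nat) (j j' : 'I_d)
  (h1 : deltaj w j nu <= (2 ^- n) * gamma)
  (h2 : deltaj w j' nu' <= (2 ^- n) * gamma) :
  powR 2 ((n%:R - 2) / tau) < (norm1 (nu - nu'))%:R
  \/ (norm1 (nu - nu') = 2%N /\ deltaj w j nu = deltaj w j' nu').
Proof.
have [hsub|hsub] := eqVneq (nu - nu') (sigma w nu j *: evec j - sigma w nu' j' *: evec j').
  right; split; last exact: deltaj_eq_of_sub.
  rewrite hsub norm1_signed_evecB ?sigma_sign //.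
  by rewrite -hsub subr_eq0.
left.
have tau0 : 0 < tau.
  by apply: le_lt_trans htau; rewrite subr_ge0 ler1n (leq_ltn_trans _ (ltn_ord j)).
have N0 : (0 : R) < (norm1 (nu - nu'))%:R.
  rewrite ltr0n lt0n; apply: contra hne => /eqP /norm1_eq0 /eqP.
  by rewrite subr_eq0.
apply: powR2_lt_of_powRN_le => //.
have : gamma * powR (norm1 (nu - nu'))%:R (- tau) <= gamma * (2 * 2 ^- n).
  by have := hb j j' nu nu' hne hsub; lra.
by rewrite ler_pM2l.
Qed.
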